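(* Let $k$ be a positive integer, $c\ge 2$ an integer, and $m=k(c^2-1)+1$. Then there exists a single-category instance $I$ with $m$ goods, cardinality constraint $k$, and some number $n$ of agents with $kn\ge m$, such that $$\frac{\text{OPT-USW}(I)}{\max_{\mathcal{A}\in \mathcal{C}_k(I)}\text{USW}(\mathcal{A})}\ge \frac{1}{2}\left(1+\sqrt{1+\frac{m-1}{k}}\right).$$
   Context: A single-category instance consists of $n$ agents and a set $M$ of $m$ indivisible goods; each agent $i$ has an additive utility function $u_i:2^M\to\mathbb{R}_{\ge 0}$ with $u_i(\emptyset)=0$ and $u_i(M)=1$. An allocation is a partition $(A_1,\dots,A_n)$ of $M$, agent $i$ receiving $A_i$. It is cardinal (for constraint $k$) if $|A_i|\le k$ for all $i$; $\mathcal{C}_k(I)$ is the set of cardinal allocations. $\text{USW}(\mathcal{A})=\sum_i u_i(A_i)$ and $\text{OPT-USW}(I)$ is its maximum over all allocations. *)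

From HB Require Import structures.
From mathcomp Require Import all_boot all_order all_algebra.
From mathcomp Require Import reals.
Set Implicit Arguments. Unset Strict Implicit. Unset Printing Implicit Defensive.
Import Order.TTheory GRing.Theory Num.Theory.
Local Open Scope ring_scope.

Section SingleCategory.
Variables (R : realType) (n m : nat).

(* Additive utilities are given by the values of single goods:
   u i g = u_i({g}); u_i(S) = \sum_(g in S) u i g. *)
Definition util_of (u : 'I_n -> 'I_m -> R) (i : 'I_n) (S : {set 'I_m}) : R :=
  \sum_(g in S) u i g.

Definition is_instance (u : 'I_n -> 'I_m -> R) : Prop :=
  (forall i g, 0 <= u i g) /\ (forall i, util_of u i [set: 'I_m] = 1).

(* An allocation (a partition of M into n bundles) is encoded by the map
   sending each good to the agent that receives it. *)
Definition allocation := {ffun 'I_m -> 'I_n}.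

Definition bundle (a : allocation) (i : 'I_n) : {set 'I_m} := [set g | a g == i].

Definition cardinal (k : nat) (a : allocation) : bool :=
  [forall i, #|bundle a i| <= k]%N.

Definition USW (u : 'I_n -> 'I_m -> R) (a : allocation) : R :=
  \sum_i util_of u i (bundle a i).

(* Maximum over all allocations (utilities are nonnegative, so 0 is a
   neutral starting value). *)
Definition OPT_USW (u : 'I_n -> 'I_m -> R) : R :=
  \big[Num.max/0]_(a : allocation) USW u a.

Definition OPT_USW_card (k : nat) (u : 'I_n -> 'I_m -> R) : R :=
  \big[Num.max/0]_(a : allocation | cardinal k a) USW u a.

End SingleCategory.

From HB Require Import structures.
From mathcomp Require Import all_boot all_order all_algebra.
From mathcomp Require Import reals zify ring lra.
Import Order.TTheory GRing.Theory Num.Theory.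
Local Open Scope ring_scope.

(* Write c = t + 1 and s = k (c + 1), and take t blocks of s goods plus one
   special good, so m = t s + 1.  Agent i < t values each good of block i at
   1/s; every other agent values only the special good.  Giving each block to
   its agent and the special good to someone else yields welfare t + 1 = c.
   Under the constraint k a block agent receives at most k goods, worth at
   most k/s, and the special good is worth at most 1, so every cardinal
   allocation has welfare at most 1 + t k / s = 2c/(c+1).  The ratio is thus
   at least (c + 1)/2, while 1 + (m - 1)/k = 1 + t (c + 1) = c^2.
   There are as many agents as goods; goods i s, ..., i s + s - 1 form block
   i and the last good, t s, is the special one. *)

Lemma sumr_ord_interval (V : nmodType) (N lo hi : nat) (x : V) : (hi <= N)%N ->
  \sum_(g < N) (if (lo <= g < hi)%N then x else 0) = x *+ (hi - lo).
Proof.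
move=> hiN; rewrite -big_mkcond /= -(big_mkord (fun g => lo <= g < hi)%N).
by rewrite -sumr_const_nat (big_nat_widenl lo 0) // (big_nat_widen _ _ _ _ _ hiN).
Qed.

Lemma ler_pdiv (F : numFieldType) (a b x y : F) :
  0 <= a -> 0 < y -> a <= x -> y <= b -> a / b <= x / y.
Proof.
move=> a_ge0 y_gt0 le_ax le_yb; have b_gt0 := lt_le_trans y_gt0 le_yb.
apply: ler_pM => //; first by rewrite invr_ge0 ltW.
by rewrite lef_pV2 ?posrE.
Qed.

Section Welfare.
Context {R : realType} {n m : nat}.
Implicit Types (u : 'I_n -> 'I_m -> R) (a : allocation n m).

Lemma USW_goodwise u a : USW u a = \sum_g u (a g) g.
Proof.
rewrite /USW /util_of /bundle.
rewrite (eq_bigr (fun i => \sum_(g | a g == i) u i g)) => [|i _]; last first.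
  by apply: eq_bigl => g; rewrite inE.
rewrite (exchange_big_dep xpredT) //=; apply: eq_bigr => g _.
by rewrite (eq_bigl (eq_op^~ (a g))) ?big_pred1_eq // => i; rewrite eq_sym.
Qed.

Lemma USW_cardinal_le_separable [k u] [v : 'I_n -> R] [w : 'I_m -> R] [a] :
  (forall i, 0 <= v i) -> (forall i g, u i g <= v i + w g) -> cardinal k a ->
  USW u a <= k%:R * \sum_i v i + \sum_g w g.
Proof.
move=> v_ge0 u_le /forallP a_card; rewrite USW_goodwise.
apply: le_trans (ler_sum _ (fun g _ => u_le (a g) g)) _.
rewrite big_split lerD2r /=.
have -> : \sum_g v (a g) = USW (fun i _ => v i) a by rewrite USW_goodwise.
rewrite mulr_sumr; apply: ler_sum => i _.
by rewrite /util_of sumr_const mulr_natl; apply: ler_wpMn2l.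
Qed.

End Welfare.

Section BlockInstance.
Variables (R : realType) (t s : nat).
Hypothesis s_gt0 : (0 < s)%N.
Local Notation N := (t * s).+1.

Definition block_util (i g : 'I_N) : R :=
  if (i < t)%N then (if (i * s <= g < i * s + s)%N then s%:R^-1 else 0)
  else (if g == ord_max then 1 else 0).

Let sV_ge0 : (0 : R) <= s%:R^-1. Proof. by rewrite invr_ge0 ler0n. Qed.

Let sumr_sV : s%:R^-1 *+ s = 1 :> R.
Proof. by rewrite -[_ *+ s]mulr_natr mulVf // pnatr_eq0 -lt0n. Qed.

Let sum_special (x : R) : \sum_(g < N) (if g == ord_max then x else 0) = x.
Proof. by rewrite -big_mkcond big_pred1_eq. Qed.

Lemma block_util_ge0 i g : 0 <= block_util i g.
Proof. by rewrite /block_util; do 2?case: ifP. Qed.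

Lemma block_instance : is_instance block_util.
Proof.
split=> [|i]; first exact: block_util_ge0.
rewrite /util_of; under eq_bigl do rewrite inE.
rewrite /block_util; case: (boolP (i < t)%N) => it; last exact: sum_special.
by rewrite sumr_ord_interval ?addKn //; nia.
Qed.

Lemma OPT_USW_block : t.+1%:R <= OPT_USW block_util.
Proof.
pose a : allocation N N := [ffun g : 'I_N => inord (g %/ s)].
apply: le_trans (le_bigmax _ _ a); rewrite USW_goodwise big_ord_recr /=.
rewrite ffunE /= mulnK // /block_util inordK ?ltnn ?eqxx; last first.
  by rewrite ltnS leq_pmulr.
rewrite -natr1 lerD2r (eq_bigr (fun _ => s%:R^-1)) => [|g _].
  by rewrite sumr_const card_ord mulnC mulrnA sumr_sV.
have g_lt := ltn_ord g; rewrite ffunE /= inordK; last first.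
  by rewrite ltnS (leq_trans (leq_div _ _)) // ltnW.
rewrite ltn_divLR // g_lt.
by rewrite leq_divM /= addnC -mulSn ltn_ceil.
Qed.

Lemma OPT_USW_card_block k : OPT_USW_card k block_util <= 1 + k%:R * t%:R / s%:R.
Proof.
pose v (i : 'I_N) : R := if (0 <= i < t)%N then s%:R^-1 else 0.
pose w (g : 'I_N) : R := if g == ord_max then 1 else 0.
have v_ge0 i : 0 <= v i by rewrite /v; case: ifP.
have u_le i g : block_util i g <= v i + w g.
  have w_ge0 : 0 <= w g by rewrite /w; case: ifP.
  rewrite /block_util /v -/(w g) leq0n /=; case: (i < t)%N; last by rewrite add0r.
  by case: ifP => _; rewrite ?lerDl ?addr_ge0.
have sum_v : \sum_i v i = t%:R / s%:R.
  rewrite sumr_ord_interval ?subn0; first by rewrite mulrC mulr_natr.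
  by apply/leqW; rewrite leq_pmulr.
apply: bigmax_le => [|a a_card].
  by rewrite addr_ge0 // !mulr_ge0.
apply: le_trans (USW_cardinal_le_separable v_ge0 u_le a_card) _.
by rewrite sum_v sum_special addrC mulrA.
Qed.

Lemma OPT_USW_card_block_gt0 k : (0 < k)%N -> 0 < OPT_USW_card k block_util.
Proof.
move=> k_gt0; pose a : allocation N N := [ffun g => g].
have a_card : cardinal k a.
  apply/forallP => i; suff -> : bundle a i = [set i] by rewrite cards1.
  by apply/setP => g; rewrite !inE ffunE.
apply: lt_le_trans (le_bigmax_cond _ _ a_card).
rewrite USW_goodwise big_ord_recr /= ffunE /block_util ltnNge leq_pmulr //=.
by rewrite eqxx ltr_pwDr // sumr_ge0 // => g _; apply: block_util_ge0.
Qed.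

End BlockInstance.

Theorem lemma1 (R : realType) (k c m : nat) :
  (0 < k)%N -> (2 <= c)%N -> m = (k * (c ^ 2 - 1) + 1)%N ->
  exists (n : nat) (u : 'I_n -> 'I_m -> R),
    is_instance u /\ (m <= k * n)%N /\
    (1 + Num.sqrt (1 + (m - 1)%:R / k%:R)) / 2
      <= OPT_USW u / OPT_USW_card k u.
Proof.
case: c => // t k_gt0 _ ->; set s := (k * t.+2)%N.
have s_gt0 : (0 < s)%N by rewrite muln_gt0 k_gt0.
have -> : (k * (t.+1 ^ 2 - 1) + 1 = (t * s).+1)%N by rewrite /s; nia.
exists (t * s).+1, (block_util R t s); split; first exact: block_instance.
split; first by rewrite leq_pmull.
have kR : (k%:R : R) != 0 by rewrite pnatr_eq0 -lt0n.
have -> : 1 + ((t * s).+1 - 1)%:R / k%:R = t.+1%:R ^+ 2 :> R.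
  by rewrite subSS subn0 /s !natrM -!natr1; field.
rewrite sqrtr_sqr ger0_norm ?ler0n //.
have -> : (1 + t.+1%:R) / 2 = t.+1%:R / (1 + k%:R * t%:R / s%:R) :> R.
  have t_ge0 : (0 : R) <= t%:R by [].
  by rewrite /s natrM -!natr1; field; rewrite kR !gt_eqF //=; lra.
apply: ler_pdiv; rewrite ?ler0n ?OPT_USW_block //.
  exact: OPT_USW_card_block_gt0.
exact: OPT_USW_card_block.
Qed.
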